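(* Let $F$ be a field of characteristic $0$, $D$ a simply laced diagram on vertices $v_1,\dots,v_n$, and $\mathfrak k=\mathfrak k(D)$ with Berman generators $X_1,\dots,X_n$. Suppose $v_i\neq v_j$ are vertices such that every vertex $v_r\notin\{v_i,v_j\}$ is adjacent to $v_i$ if and only if it is adjacent to $v_j$. (a) If $v_i,v_j$ are not adjacent, let $D'$ be obtained from $D$ by deleting $v_j$, and let $X'_r$ ($r\neq j$) be the Berman generators of $\mathfrak k':=\mathfrak k(D')$. Then there is a well-defined surjective Lie algebra homomorphism $\varphi:\mathfrak k\to\mathfrak k'$ with $\varphi(X_r)=X'_r$ for $r\ne j$ and $\varphi(X_j)=X'_i$. (b) If $v_i,v_j$ are adjacent, let $D'$ be obtained from $D$ by deleting all edges at $v_j$ except the edge $\{v_i,v_j\}$, and let $X'_1,\dots,X'_n$ be the Berman generators of $\mathfrak k':=\mathfrak k(D')$. Then there is a well-defined surjective Lie algebra homomorphism $\varphi:\mathfrak k\to\mathfrak k'$ with $\varphi(X_r)=X'_r$ for $r\neq j$ and $\varphi(X_j)=[X'_i,X'_j]$.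
   Context: For a simply laced diagram (finite simple graph) $D$ on vertices $v_1,\dots,v_n$, $\mathfrak k(D)$ denotes the maximal compact subalgebra (fixed points of the Cartan--Chevalley involution $e_i\mapsto -f_i$, $f_i\mapsto -e_i$, $h_i\mapsto -h_i$) of the Kac--Moody algebra over $F$ whose generalized Cartan matrix has $a_{ii}=2$ and $a_{ij}=-1$ or $0$ according as $v_i,v_j$ are adjacent or not. By Berman's theorem, $\mathfrak k(D)$ is the Lie algebra with generators $X_1,\dots,X_n$ (the Berman generators, $X_i=e_i-f_i$) and defining relations $[X_a,[X_a,X_b]]=-X_b$ if $v_a,v_b$ are adjacent, $[X_a,X_b]=0$ if $a\ne b$ are non-adjacent. *)

From HB Require Import structures.
From mathcomp Require Import all_boot all_order all_algebra.
Set Implicit Arguments. Unset Strict Implicit. Unset Printing Implicit Defensive.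
Import GRing.Theory.
Local Open Scope ring_scope.

Definition is_lie (F : fieldType) (L : lmodType F) (br : L -> L -> L) : Prop :=
  [/\ (forall (a : F) (x y z : L), br (a *: x + y) z = a *: br x z + br y z),
      (forall (a : F) (x y z : L), br z (a *: x + y) = a *: br z x + br z y),
      (forall x : L, br x x = 0) &
      (forall x y z : L, br x (br y z) + br y (br z x) + br z (br x y) = 0)].

Definition is_lie_hom (F : fieldType) (L M : lmodType F)
    (brL : L -> L -> L) (brM : M -> M -> M) (f : L -> M) : Prop :=
  [/\ (forall (a : F) (x y : L), f (a *: x + y) = a *: f x + f y) &
      (forall x y : L, f (brL x y) = brM (f x) (f y))].

(* A simply laced diagram on vertices 'I_n: a simple graph
   (symmetric irreflexive adjacency relation). *)
Definition simple_graph (n : nat) (adj : rel 'I_n) : Prop :=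
  (forall a b, adj a b = adj b a) /\ (forall a, ~~ adj a a).

Definition berman_rel (F : fieldType) (n : nat) (adj : rel 'I_n)
    (L : lmodType F) (br : L -> L -> L) (X : 'I_n -> L) : Prop :=
  (forall a b, adj a b -> br (X a) (br (X a) (X b)) = - X b) /\
  (forall a b, a != b -> ~~ adj a b -> br (X a) (X b) = 0).

Definition lie_generated (F : fieldType) (n : nat)
    (L : lmodType F) (br : L -> L -> L) (X : 'I_n -> L) : Prop :=
  forall S : L -> Prop,
    S 0 ->
    (forall (a : F) x y, S x -> S y -> S (a *: x + y)) ->
    (forall x y, S x -> S y -> S (br x y)) ->
    (forall a, S (X a)) ->
    forall x, S x.

(* (L, br, X) is the Lie algebra k(D) with Berman generators X, i.e. the
   Lie algebra presented by generators X_1..X_n and the Berman relations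
   (Berman's theorem): it is generated by the X a, satisfies the relations,
   and is universal among Lie algebras with elements satisfying them. *)
Definition is_k_of (F : fieldType) (n : nat) (adj : rel 'I_n)
    (L : lmodType F) (br : L -> L -> L) (X : 'I_n -> L) : Prop :=
  [/\ is_lie br, berman_rel adj br X, lie_generated br X &
      forall (M : lmodType F) (brM : M -> M -> M) (Y : 'I_n -> M),
        is_lie brM -> berman_rel adj brM Y ->
        exists f : L -> M, is_lie_hom br brM f /\ forall a, f (X a) = Y a].

(* D' for part (a): delete vertex j; vertices 'I_n.-1, vertex k <-> lift j k. *)
Definition delete_vertex (n : nat) (adj : rel 'I_n) (j : 'I_n) : rel 'I_n.-1 :=
  fun k l => adj (lift j k) (lift j l).

Definition keep_only_edge (n : nat) (adj : rel 'I_n) (i j : 'I_n) : rel 'I_n :=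
  fun r s =>
    if (r == j) || (s == j) then
      adj r s && (((r == i) && (s == j)) || ((r == j) && (s == i)))
    else adj r s.

(* Since k(D) is presented by the Berman generators and relations, a Lie
   homomorphism k(D) -> k' exists as soon as we exhibit elements Y_r of k'
   satisfying the Berman relations of D; it is onto as soon as its image
   contains the Berman generators of k'.
   (a) If v_i, v_j are not adjacent, take Y_r = X'_r for r <> j and
       Y_j = X'_i: merging the twin v_j into v_i maps edges of D to edges of
       D' and non-edges to non-edges (or to equal vertices).
   (b) If v_i, v_j are adjacent, take Y_r = X'_r for r <> j and
       Y_j = Z := [X'_i, X'_j].  The relations involving Y_j follow from a few
       identities about Z = [A, B] for a Berman pair A - B in any Lie algebra
       (the "sl2 computations" below); one of them needs 2 <> 0 in F. *)

From HB Require Import structures.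
From mathcomp Require Import all_boot all_order all_algebra.
Set Implicit Arguments. Unset Strict Implicit.
Import GRing.Theory.
Local Open Scope ring_scope.

Section BracketIdentities.
Variables (F : fieldType) (L : lmodType F) (br : L -> L -> L).
Hypothesis hL : is_lie br.

Lemma br0l z : br 0 z = 0.
Proof.
case: hL => hl _ _ _.
by have := hl (-1) 0 0 z; rewrite scaler0 addr0 => ->; rewrite scaleN1r addNr.
Qed.

Lemma br0r z : br z 0 = 0.
Proof.
case: hL => _ hr _ _.
by have := hr (-1) 0 0 z; rewrite scaler0 addr0 => ->; rewrite scaleN1r addNr.
Qed.

Lemma brDl x y z : br (x + y) z = br x z + br y z.
Proof. by case: hL => hl _ _ _; have := hl 1 x y z; rewrite !scale1r. Qed.

Lemma brDr x y z : br z (x + y) = br z x + br z y.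
Proof. by case: hL => _ hr _ _; have := hr 1 x y z; rewrite !scale1r. Qed.

Lemma brNl x z : br (- x) z = - br x z.
Proof. by case: hL => hl _ _ _; have := hl (-1) x 0 z; rewrite !addr0 br0l addr0 !scaleN1r. Qed.

Lemma brNr x z : br z (- x) = - br z x.
Proof. by case: hL => _ hr _ _; have := hr (-1) x 0 z; rewrite !addr0 br0r addr0 !scaleN1r. Qed.

Lemma brC x y : br x y = - br y x.
Proof.
case: hL => _ _ halt _.
have := halt (x + y); rewrite brDl !brDr !halt add0r addr0 => /eqP.
by rewrite addr_eq0 => /eqP.
Qed.

Lemma brJ x y z : br x (br y z) = br (br x y) z + br y (br x z).
Proof.
case: hL => _ _ _ hjac.
have /eqP := hjac x y z; rewrite -addrA addr_eq0 => /eqP ->.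
rewrite opprD (brC y (br z x)) opprK (brC (br z x) y) (brC z x) brNr opprK.
by rewrite (brC z (br x y)) opprK addrC.
Qed.

End BracketIdentities.

Lemma double_eq0 (F : fieldType) (hF2 : 2 \notin [pchar F]) (L : lmodType F) (v : L) :
  v + v = 0 -> v = 0.
Proof.
move=> vv0; have /eqP : (2%:R : F) *: v = 0 by rewrite scaler_nat mulr2n.
have two_neq0 : (2%:R : F) != 0 by move: hF2; rewrite inE /= => ->.
by rewrite scaler_eq0 (negbTE two_neq0) => /eqP.
Qed.

Section Sl2Computations.
(* These identities say how Z interacts with A and with a third
   element C; they give the Berman relations of the new generator Y_j in (b). *)
Variables (F : fieldType) (L : lmodType F) (br : L -> L -> L).
Hypothesis hL : is_lie br.
Variables A B : L.
Hypothesis hAB : br A (br A B) = - B.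
Hypothesis hBA : br B (br B A) = - A.

Lemma commutator_pair : br (br A B) (br (br A B) A) = - A.
Proof.
have ZA : br (br A B) A = B by rewrite (brC hL) hAB opprK.
by rewrite ZA (brC hL) (brC hL A B) (brNr hL) opprK hBA.
Qed.

Lemma commutator_adj (hF2 : 2 \notin [pchar F]) (C : L) :
  br A (br A C) = - C -> br B C = 0 -> br (br A B) (br (br A B) C) = - C.
Proof.
move=> hAC hBC.
have ZB : br (br A B) B = - A by rewrite (brC hL) (brC hL A B) (brNr hL) opprK hBA.
have ZC : br (br A B) C = - br B (br A C).
  have e := brJ hL A B C; rewrite hBC (br0r hL) in e.
  by apply/eqP; rewrite -addr_eq0 -e.
(* Applying ad A twice to [B, C] = 0 shows 2 [Z, [A, C]] = 0. *)
have ZAC : br (br A B) (br A C) = 0.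
  apply: (double_eq0 hF2).
  have e : br A (br A (br B C)) = 0 by rewrite hBC !(br0r hL).
  rewrite (brJ hL A B C) (brDr hL) (brJ hL A (br A B) C) (brJ hL A B (br A C)) hAB hAC in e.
  by rewrite (brNl hL) (brNr hL) hBC oppr0 add0r addr0 in e.
by rewrite ZC (brNr hL) (brJ hL (br A B) B) ZB ZAC (br0r hL) addr0 (brNl hL) opprK.
Qed.

End Sl2Computations.

Section CommutatorNeighbours.
Variables (F : fieldType) (L : lmodType F) (br : L -> L -> L).
Hypothesis hL : is_lie br.
Variables A B C : L.
Hypothesis hBC : br B C = 0.

Lemma commutator_adj_rev : br C (br C A) = - A -> br C (br C (br A B)) = - br A B.
Proof.
move=> hCA; have hCB : br C B = 0 by rewrite (brC hL) hBC oppr0.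
by rewrite (brJ hL C A B) hCB (br0r hL) addr0 (brJ hL) hCA hCB (br0r hL) addr0 (brNl hL).
Qed.

Lemma commutator_comm : br A C = 0 -> br (br A B) C = 0.
Proof. by move=> hAC; have := brJ hL A B C; rewrite hBC hAC !(br0r hL) addr0 => <-. Qed.

End CommutatorNeighbours.

(* A Lie homomorphism whose image contains a generating family of the target
   is onto, since its image is a Lie subalgebra. *)
Lemma lie_hom_onto (F : fieldType) (L M : lmodType F) (brL : L -> L -> L)
    (brM : M -> M -> M) (f : L -> M) (m : nat) (Y : 'I_m -> M) :
  is_lie_hom brL brM f -> lie_generated brM Y ->
  (forall k, exists x, f x = Y k) -> forall y, exists x, f x = y.
Proof.
case=> f_lin f_br genY hY y; apply: (genY (fun y => exists x, f x = y)) => //.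
- by exists 0; have := f_lin (-1) 0 0; rewrite scaler0 addr0 => ->; rewrite scaleN1r addNr.
- by move=> a _ _ [x <-] [x' <-]; exists (a *: x + x').
- by move=> _ _ [x <-] [x' <-]; exists (brL x x').
Qed.

Section MergeTwins.
Variables (n : nat) (adj : rel 'I_n) (i j : 'I_n).
Hypothesis hsym : forall a b, adj a b = adj b a.
Hypothesis hirr : forall a, ~~ adj a a.
Hypothesis hij : i != j.
Hypothesis htwin : forall r, r != i -> r != j -> adj r i = adj r j.
Hypothesis hnij : ~~ adj i j.

Definition merge_twin (r : 'I_n) : 'I_n := if r == j then i else r.

Let twin_l r : r != i -> r != j -> adj i r = adj j r.
Proof. by move=> ri rj; rewrite hsym htwin // hsym. Qed.

(* Merging maps edges to edges: no edge of D joins i and j. *)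
Lemma merge_twin_adj a b : adj a b -> adj (merge_twin a) (merge_twin b).
Proof.
rewrite /merge_twin; case: (eqVneq a j) => [->|aj]; case: (eqVneq b j) => [->|bj] //.
- by rewrite (negbTE (hirr j)).
- move=> jb; have bi : b != i by apply: contraTneq jb => ->; rewrite hsym.
  by rewrite twin_l.
- move=> aj'; have ai : a != i by apply: contraTneq aj' => ->.
  by rewrite htwin.
Qed.

Lemma merge_twin_nonadj a b : ~~ adj a b -> merge_twin a != merge_twin b ->
  ~~ adj (merge_twin a) (merge_twin b).
Proof.
rewrite /merge_twin; case: (eqVneq a j) => [->|aj]; case: (eqVneq b j) => [->|bj] //.
- by move=> jb ib; rewrite twin_l // eq_sym.
- by move=> aj' ai; rewrite htwin.
Qed.

Variables (F : fieldType) (L' : lmodType F) (br' : L' -> L' -> L') (X' : 'I_n.-1 -> L').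

(* The candidate images: Y r is the generator of D' at the vertex merge_twin r. *)
Definition merged_gens (r : 'I_n) : L' := oapp X' 0 (unlift j (merge_twin r)).

Lemma merged_gensP r : exists k, merged_gens r = X' k /\ lift j k = merge_twin r.
Proof.
have : j != merge_twin r.
  by rewrite /merge_twin eq_sym; case: (eqVneq r j).
by case/unlift_some => k e1 e2; exists k; rewrite /merged_gens e2.
Qed.

Lemma merged_gens_lift k : merged_gens (lift j k) = X' k.
Proof. by rewrite /merged_gens /merge_twin eq_sym (negbTE (neq_lift j k)) liftK. Qed.

Lemma merged_gens_twin k : lift j k = i -> merged_gens j = X' k.
Proof. by move=> ki; rewrite /merged_gens /merge_twin eqxx -ki liftK. Qed.

Lemma merged_gens_berman :
  is_lie br' -> berman_rel (delete_vertex adj j) br' X' -> berman_rel adj br' merged_gens.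
Proof.
move=> hL' [adjX' commX']; split=> a b.
  case: (merged_gensP a) (merged_gensP b) => [ka [-> ea]] [kb [-> eb]] ab.
  by apply: adjX'; rewrite /delete_vertex ea eb merge_twin_adj.
case: (merged_gensP a) (merged_gensP b) => [ka [-> ea]] [kb [-> eb]] _ ab.
case: (eqVneq (merge_twin a) (merge_twin b)) => [gab|gab].
  have -> : ka = kb by apply: (@lift_inj _ j); rewrite ea eb.
  by case: hL'.
apply: commX'; first by apply: contra_neq gab => kab; rewrite -ea -eb kab.
by rewrite /delete_vertex ea eb merge_twin_nonadj.
Qed.

End MergeTwins.

Section FuseTwins.
Variables (n : nat) (adj : rel 'I_n) (i j : 'I_n).
Hypothesis hsym : forall a b, adj a b = adj b a.
Hypothesis hirr : forall a, ~~ adj a a.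
Hypothesis hij : i != j.
Hypothesis htwin : forall r, r != i -> r != j -> adj r i = adj r j.
Hypothesis hadj : adj i j.

Lemma keep_edge_away r s : r != j -> s != j -> keep_only_edge adj i j r s = adj r s.
Proof. by move=> rj sj; rewrite /keep_only_edge (negbTE rj) (negbTE sj). Qed.

Lemma keep_edge_ij : keep_only_edge adj i j i j /\ keep_only_edge adj i j j i.
Proof. by rewrite /keep_only_edge !eqxx !orbT (hsym j i) hadj /= ?orbT. Qed.

Lemma keep_edge_j r : r != i -> keep_only_edge adj i j j r = false.
Proof.
by move=> ri; rewrite /keep_only_edge eqxx (negbTE ri) (eq_sym j i) (negbTE hij) /= andbF.
Qed.

Variables (F : fieldType) (L' : lmodType F) (br' : L' -> L' -> L') (X' : 'I_n -> L').
Hypothesis hF2 : 2 \notin [pchar F].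
Hypothesis hL' : is_lie br'.
Hypothesis hB' : berman_rel (keep_only_edge adj i j) br' X'.

Definition fused_gens (r : 'I_n) : L' := if r == j then br' (X' i) (X' j) else X' r.

Let Xij : br' (X' i) (br' (X' i) (X' j)) = - X' j.
Proof. by case: hB' => adjX' _; apply: adjX'; case: keep_edge_ij. Qed.

Let Xji : br' (X' j) (br' (X' j) (X' i)) = - X' i.
Proof. by case: hB' => adjX' _; apply: adjX'; case: keep_edge_ij. Qed.

Let Xj_comm r : r != i -> r != j -> br' (X' j) (X' r) = 0.
Proof. by move=> ri rj; case: hB' => _ commX'; apply: commX'; rewrite 1?eq_sym ?keep_edge_j. Qed.

Lemma fused_gens_adj a b : adj a b -> br' (fused_gens a) (br' (fused_gens a) (fused_gens b)) = - fused_gens b.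
Proof.
case: hB' => adjX' _; rewrite /fused_gens.
case: (eqVneq a j) => [->|aj]; case: (eqVneq b j) => [->|bj] ab.
- by rewrite (negbTE (hirr j)) in ab.
- case: (eqVneq b i) => [->|bi]; first exact: commutator_pair.
  apply: (commutator_adj hL' Xij Xji hF2 _ (Xj_comm bi bj)).
  by apply: adjX'; rewrite keep_edge_away // hsym htwin // hsym.
- case: (eqVneq a i) => [->|ai]; first by rewrite Xij (brNr hL').
  apply: (commutator_adj_rev hL' (Xj_comm ai aj)).
  by apply: adjX'; rewrite keep_edge_away // htwin.
- by apply: adjX'; rewrite keep_edge_away.
Qed.

Lemma fused_gens_comm a b : a != b -> ~~ adj a b -> br' (fused_gens a) (fused_gens b) = 0.
Proof.
case: hB' => _ commX'; rewrite /fused_gens.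
case: (eqVneq a j) => [->|aj]; case: (eqVneq b j) => [->|bj] ab nab.
- by [].
- have bi : b != i by apply: contraNneq nab => ->; rewrite hsym.
  apply: (commutator_comm hL' (Xj_comm bi bj)).
  by apply: commX'; rewrite 1?eq_sym // keep_edge_away // hsym htwin // hsym.
- have ai : a != i by apply: contraNneq nab => ->.
  rewrite (brC hL') (commutator_comm hL' (Xj_comm ai aj)) ?oppr0 //.
  by apply: commX'; rewrite 1?eq_sym // keep_edge_away // hsym htwin.
- by apply: commX'; rewrite ?keep_edge_away.
Qed.

Lemma fused_gens_berman : berman_rel adj br' fused_gens.
Proof. by split; [exact: fused_gens_adj | exact: fused_gens_comm]. Qed.

Lemma fused_gens_recover : br' (fused_gens j) (fused_gens i) = X' j.
Proof. by rewrite /fused_gens eqxx (negbTE hij) (brC hL') Xij opprK. Qed.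

End FuseTwins.

Theorem mainTheorem4 (F : fieldType) (hF : [pchar F] =i pred0)
    (n : nat) (adj : rel 'I_n) (hD : simple_graph adj)
    (i j : 'I_n) (hij : i != j)
    (htwin : forall r : 'I_n, r != i -> r != j -> adj r i = adj r j)
    (L : lmodType F) (br : L -> L -> L) (X : 'I_n -> L)
    (hk : is_k_of adj br X) :
  (* (a) *)
  (~~ adj i j ->
   forall (L' : lmodType F) (br' : L' -> L' -> L') (X' : 'I_n.-1 -> L'),
     is_k_of (delete_vertex adj j) br' X' ->
     exists phi : L -> L',
       [/\ is_lie_hom br br' phi,
           (forall y : L', exists x : L, phi x = y),
           (forall k : 'I_n.-1, phi (X (lift j k)) = X' k) &
           (forall k : 'I_n.-1, lift j k = i -> phi (X j) = X' k)]) /\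
  (* (b) *)
  (adj i j ->
   forall (L' : lmodType F) (br' : L' -> L' -> L') (X' : 'I_n -> L'),
     is_k_of (keep_only_edge adj i j) br' X' ->
     exists phi : L -> L',
       [/\ is_lie_hom br br' phi,
           (forall y : L', exists x : L, phi x = y),
           (forall r : 'I_n, r != j -> phi (X r) = X' r) &
           phi (X j) = br' (X' i) (X' j)]).
Proof.
case: hD => hsym hirr; case: hk => _ _ _ universal.
split=> [nij L' br' X' [hL' hB' hG' _] | ij L' br' X' [hL' hB' hG' _]].
- have hY := merged_gens_berman hsym hirr hij htwin nij hL' hB'.
  have [phi [hphi phiX]] := universal L' br' _ hL' hY.
  exists phi; split=> // [|k|k ki]; last 2 first.
  + by rewrite phiX merged_gens_lift.
  + by rewrite phiX (merged_gens_twin X' ki).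
  apply: (lie_hom_onto hphi hG') => k; exists (X (lift j k)).
  by rewrite phiX merged_gens_lift.
- have hF2 : 2 \notin [pchar F] by rewrite hF.
  have hY := fused_gens_berman hsym hirr hij htwin ij hF2 hL' hB'.
  have [phi [hphi phiX]] := universal L' br' _ hL' hY.
  have phiXr r : r != j -> phi (X r) = X' r by move=> rj; rewrite phiX /fused_gens (negbTE rj).
  exists phi; split=> //; last by rewrite phiX /fused_gens eqxx.
  apply: (lie_hom_onto hphi hG') => r; case: (eqVneq r j) => [->|rj].
  + exists (br (X j) (X i)); case: hphi => _ ->.
    by rewrite !phiX (fused_gens_recover hsym hij ij hL' hB').
  + by exists (X r); exact: phiXr.
Qed.
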